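(* Let $0<\gamma<\infty$ and $T>0$. Let $(u_1,\omega_1,\psi_1)$ be a classical solution of the system $$\partial_t u_1 + u^r\partial_r u_1 + u^z\partial_z u_1 = 2u_1\partial_z\psi_1,\qquad \partial_t \omega_1 + u^r\partial_r \omega_1 + u^z\partial_z \omega_1 = \partial_z(u_1^2),$$ $$-\Big(\partial_r^2+\frac{3}{r}\partial_r+\partial_z^2\Big)\psi_1=\omega_1,\qquad u^r=-r\partial_z\psi_1,\quad u^z=2\psi_1+r\partial_r\psi_1,$$ in a space-time region $\mathcal{W}$, where $\mathcal{W}$ is either (i) $\mathcal{C}_{\delta,T}=\{(r,z,t): 1-\delta<r<1,\ -\delta<z<\delta,\ T-\delta<t<T\}$ for some $0<\delta\ll 1$, or (ii) $\mathcal{W}_{\delta(t)}=\{(r,z,t): 1-\delta(t)<r<1,\ -\delta(t)<z<\delta(t),\ T_0<t<T\}$ for some $T_0<T$ and some decreasing function $\delta:(T_0,T)\to(0,\infty)$ with $\lim_{t\to T^-}\delta(t)=0$ and $\limsup_{t\to T^-}(T-t)^{-\gamma}\delta(t)=\infty$. Suppose that on $\mathcal{W}$ the solution has the self-similar form $$u_1(r,z,t)=(T-t)^{-1+\frac{\gamma}{2}}U(R,Z),\quad \omega_1(r,z,t)=(T-t)^{-1}\Omega(R,Z),\quad \psi_1(r,z,t)=(T-t)^{-1+2\gamma}\Psi(R,Z),$$ with $R=(r-1)(T-t)^{-\gamma}$, $Z=z(T-t)^{-\gamma}$, where the profiles $U,\Omega,\Psi$ are sufficiently smooth (classical) functions independent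 of $t$ defined on the closed left half-plane $\mathcal{D}=\{(R,Z)\in\mathbb{R}^2: R\le 0\}$. Assume the decay condition: for every fixed $R\le 0$, $$|U(R,Z)|+|\Omega(R,Z)|\to 0\quad\text{as } |Z|\to\infty.$$ Then $u_1\equiv 0$ and $\omega_1\equiv 0$ on $\mathcal{W}$, and there are constants $a,b$ such that $\psi_1(r,z,t)=a(T-t)^{-1+\gamma}z+b(T-t)^{-1+2\gamma}$ there (equivalently $\Psi(R,Z)=aZ+b$ on $\mathcal{D}$).
   Context: This concerns axisymmetric solutions of the 3D incompressible Euler equations in the cylinder $\{0<r<1\}$ in cylindrical coordinates $(r,\theta,z)$, with velocity $u=u^re_r+u^\theta e_\theta+u^ze_z$ independent of $\theta$. Here $u_1=u^\theta/r$, $\omega_1=\omega^\theta/r$, $\psi_1=\psi^\theta/r$, where $\omega^\theta$ is the angular component of the vorticity $\mathrm{curl}\,u$ and $\psi^\theta$ is the angular component of the vector stream function $\psi$ (with $\mathrm{curl}\,\psi=u$, $\mathrm{div}\,\psi=0$). No boundary condition at $r=1$ is assumed. $T$ is a (possible) blow-up time. *)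

From Stdlib Require Import Reals Lra.
Open Scope R_scope.

Definition contD (f : R -> R -> R) : Prop :=
  forall X Y, X <= 0 -> forall eps, eps > 0 ->
    exists del, del > 0 /\
      forall X' Y', X' <= 0 -> Rabs (X' - X) < del -> Rabs (Y' - Y) < del ->
        Rabs (f X' Y' - f X Y) < eps.

Definition C1D (f fR fZ : R -> R -> R) : Prop :=
  (forall X Y, X < 0 ->
     derivable_pt_lim (fun x => f x Y) X (fR X Y) /\
     derivable_pt_lim (fun y => f X y) Y (fZ X Y)) /\
  contD f /\ contD fR /\ contD fZ.

Definition C2D (f : R -> R -> R) : Prop :=
  exists fR fZ, C1D f fR fZ /\
    (exists fRR fRZ, C1D fR fRR fRZ) /\
    (exists fZR fZZ, C1D fZ fZR fZZ).

Definition regionC (T d r z t : R) : Prop :=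
  1 - d < r < 1 /\ - d < z < d /\ T - d < t < T.

Definition regionW (T T0 : R) (delta : R -> R) (r z t : R) : Prop :=
  T0 < t < T /\ 1 - delta t < r < 1 /\ - delta t < z < delta t.

Definition admissible_delta (gamma T T0 : R) (delta : R -> R) : Prop :=
  (forall t, T0 < t < T -> 0 < delta t) /\
  (forall s t, T0 < s -> s < t -> t < T -> delta t <= delta s) /\
  (forall eps, eps > 0 -> exists eta, eta > 0 /\
     forall t, T0 < t < T -> T - eta < t -> delta t < eps) /\
  (forall M eta, eta > 0 -> exists t, T0 < t < T /\ T - eta < t /\
     Rpower (T - t) (- gamma) * delta t > M).

Definition euler_solution_on (W : R -> R -> R -> Prop)
  (u1 w1 psi1 : R -> R -> R -> R) : Prop :=
  exists psir psiz : R -> R -> R -> R,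
  forall r z t, W r z t ->
    exists ut ur uz wt wr wz u2z prr pzz : R,
      derivable_pt_lim (fun s => u1 r z s) t ut /\
      derivable_pt_lim (fun x => u1 x z t) r ur /\
      derivable_pt_lim (fun y => u1 r y t) z uz /\
      derivable_pt_lim (fun s => w1 r z s) t wt /\
      derivable_pt_lim (fun x => w1 x z t) r wr /\
      derivable_pt_lim (fun y => w1 r y t) z wz /\
      derivable_pt_lim (fun y => (u1 r y t) ^ 2) z u2z /\
      derivable_pt_lim (fun x => psi1 x z t) r (psir r z t) /\
      derivable_pt_lim (fun y => psi1 r y t) z (psiz r z t) /\
      derivable_pt_lim (fun x => psir x z t) r prr /\
      derivable_pt_lim (fun y => psiz r y t) z pzz /\
      (let vr := - r * psiz r z t in
       let vz := 2 * psi1 r z t + r * psir r z t in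
       ut + vr * ur + vz * uz = 2 * u1 r z t * psiz r z t /\
       wt + vr * wr + vz * wz = u2z /\
       - (prr + 3 / r * psir r z t + pzz) = w1 r z t).

From Stdlib Require Import Reals Lra.
Open Scope R_scope.

(* Substituting the self-similar ansatz into the Poisson equation and into the
   vorticity equation gives, at the profile point (X, Y) observed at time t
   with scale s = (T - t)^gamma (so r = 1 + X s),
       PRR + PZZ + Om + 3 s / (1 + X s) PR = 0,
       Om + gamma Y OZ - 2 U UZ + 2 s Psi OZ = 0.
   The region W reaches every (X, Y) with X < 0 at two different scales, so
   each identity splits into its s-free part and its s-coefficient.  The first
   gives PR = 0 and Om = - PZZ, hence no profile depends on R; the second gives
   Psi OZ = 0 and Om + gamma Y OZ = 2 U UZ.  Where OZ <> 0 the stream profile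
   would vanish, forcing OZ = 0 after all; so Om is constant in Z and vanishes
   by decay, then U^2 is constant in Z and vanishes by decay, and PZZ = - Om = 0
   makes Psi affine in Z, up to the boundary R = 0 by continuity. *)

(* A derivative at x is determined by the values of the function on any
   left neighbourhood (x - e, x]; used because the region W is only
   guaranteed to be open towards the past in the time variable. *)
Lemma derive_unique_left (f g : R -> R) x l l' e : 0 < e ->
  (forall y, x - e < y <= x -> f y = g y) ->
  derivable_pt_lim f x l -> derivable_pt_lim g x l' -> l = l'.
Proof.
  intros He Hfg Hf Hg.
  destruct (Req_dec l l') as [|Hne]; [assumption | exfalso].
  set (eps := Rabs (l - l') / 2).
  assert (Heps : 0 < eps) by (assert (0 < Rabs (l - l')) by (apply Rabs_pos_lt; lra); unfold eps; lra).
  destruct (Hf eps Heps) as [d1 Hd1]; destruct (Hg eps Heps) as [d2 Hd2].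
  set (h := - Rmin (Rmin d1 d2) e / 2).
  assert (Hm : 0 < Rmin (Rmin d1 d2) e) by (pose proof (cond_pos d1); pose proof (cond_pos d2); repeat apply Rmin_pos; lra).
  pose proof (Rmin_l (Rmin d1 d2) e); pose proof (Rmin_r (Rmin d1 d2) e).
  pose proof (Rmin_l d1 d2); pose proof (Rmin_r d1 d2).
  assert (Hh : h <> 0) by (unfold h; lra).
  assert (Habs : Rabs h = Rmin (Rmin d1 d2) e / 2) by (unfold h; rewrite Rabs_left; lra).
  specialize (Hd1 h Hh ltac:(rewrite Habs; lra)).
  specialize (Hd2 h Hh ltac:(rewrite Habs; lra)).
  rewrite (Hfg (x + h)), (Hfg x) in Hd1 by (unfold h; lra).
  set (q := (g (x + h) - g x) / h) in *.
  assert (Rabs (l - l') <= Rabs (q - l) + Rabs (q - l')).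
  { replace (l - l') with (- (q - l) + (q - l')) by ring.
    rewrite <- (Rabs_Ropp (q - l)). apply Rabs_triang. }
  unfold eps in *; lra.
Qed.

Lemma derive_locally_zero (f : R -> R) c x del l : Rabs (x - c) < del ->
  (forall y, Rabs (y - c) < del -> f y = 0) -> derivable_pt_lim f x l -> l = 0.
Proof.
  intros Hx Hz Hf.
  apply (derive_unique_left f (fct_cte 0) x l 0 (del - Rabs (x - c))); [lra | | exact Hf | apply derivable_pt_lim_const].
  intros y Hy. apply Hz.
  replace (y - c) with ((y - x) + (x - c)) by ring.
  eapply Rle_lt_trans; [apply Rabs_triang |]. rewrite Rabs_left1; lra.
Qed.

Lemma zero_derive_const (f : R -> R) a b :
  (forall x, Rmin a b <= x <= Rmax a b -> derivable_pt_lim f x 0) -> f a = f b.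
Proof.
  intros Hd.
  assert (Hseg : forall lo hi, lo <= hi ->
            (forall x, lo <= x <= hi -> derivable_pt_lim f x 0) -> f hi = f lo).
  { intros lo hi Hlh Hd'.
    set (pr := fun x (P : lo < x < hi) => exist (fun l => derivable_pt_lim f x l) 0
                  (Hd' x (conj (Rlt_le _ _ (proj1 P)) (Rlt_le _ _ (proj2 P))))).
    apply (null_derivative_loc f lo hi pr); [| reflexivity | lra].
    intros x Hx. apply derivable_continuous_pt. exists 0. now apply Hd'. }
  destruct (Rle_dec a b) as [Hab | Hab].
  - rewrite Rmin_left, Rmax_right in Hd by lra. symmetry. apply Hseg; assumption.
  - rewrite Rmin_right, Rmax_left in Hd by lra. apply Hseg; [lra | assumption].
Qed.

Lemma derive_rescaled (F : R -> R) c A b x l :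
  derivable_pt_lim F ((x - b) * A) l ->
  derivable_pt_lim (fun y => c * F ((y - b) * A)) x (c * (l * A)).
Proof.
  intros HF.
  apply (derivable_pt_lim_scal (comp F (fun y => (y - b) * A))).
  apply derivable_pt_lim_comp; [| exact HF].
  pose proof (derivable_pt_lim_mult (id - fct_cte b)%F (fct_cte A) x _ _
    (derivable_pt_lim_minus _ _ x _ _ (derivable_pt_lim_id x) (derivable_pt_lim_const b x))
    (derivable_pt_lim_const A x)) as D.
  cbv [mult_fct minus_fct fct_cte id] in D.
  replace ((1 - 0) * A + (x - b) * 0) with A in D by ring. exact D.
Qed.

Lemma derive_square (f : R -> R) x l :
  derivable_pt_lim f x l -> derivable_pt_lim (fun y => f y ^ 2) x (2 * f x * l).
Proof.
  intros Hf.
  replace (2 * f x * l) with (INR 2 * f x ^ Init.Nat.pred 2 * l) by (simpl; ring).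
  exact (derivable_pt_lim_comp f (fun y => y ^ 2) x l _ Hf (derivable_pt_lim_pow (f x) 2)).
Qed.

Lemma derive_time_power T e t : t < T ->
  derivable_pt_lim (fun s => Rpower (T - s) e) t (- e * Rpower (T - t) (e - 1)).
Proof.
  intros Ht.
  replace (- e * Rpower (T - t) (e - 1)) with (e * Rpower (T - t) (e - 1) * (0 - 1)) by ring.
  apply (derivable_pt_lim_comp (fun s => T - s) (fun x => Rpower x e)).
  - apply (derivable_pt_lim_minus (fct_cte T) id); [apply derivable_pt_lim_const | apply derivable_pt_lim_id].
  - apply derivable_pt_lim_power. lra.
Qed.

Lemma derive_ext_unique (f g : R -> R) x l l' :
  (forall y, f y = g y) -> derivable_pt_lim f x l -> derivable_pt_lim g x l' -> l = l'.
Proof.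
  intros Hfg Hf Hg. apply (uniqueness_limite g x); [apply (derivable_pt_lim_ext f) |]; assumption.
Qed.

Lemma affine_of_constant_derivative (f : R -> R) a :
  (forall y, derivable_pt_lim f y a) -> forall y, f y = a * y + f 0.
Proof.
  intros Hf y.
  assert (Hg : forall x, derivable_pt_lim (fun y => f y - a * y) x 0).
  { intro x. replace 0 with (a - a * 1) by ring.
    apply (derivable_pt_lim_minus f (fun y => a * y)); [apply Hf |].
    apply (derivable_pt_lim_scal id), derivable_pt_lim_id. }
  pose proof (zero_derive_const (fun y => f y - a * y) y 0 (fun x _ => Hg x)). lra.
Qed.

Lemma contD_slice (F : R -> R -> R) X Y : contD F -> X <= 0 ->
  continuity_pt (fun y => F X y) Y.
Proof.
  intros HF HX eps Heps.
  destruct (HF X Y HX eps Heps) as [del [Hdel Hclose]].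
  exists del; split; [exact Hdel |].
  intros y [_ Hy]. simpl in *; unfold R_dist in *.
  apply Hclose; [exact HX | rewrite Rminus_diag, Rabs_R0; exact Hdel | exact Hy].
Qed.

Definition vanishes_at_infinity (f : R -> R) : Prop :=
  forall eps, eps > 0 -> exists M, forall y, M < Rabs y -> Rabs (f y) < eps.

Lemma vanishing_constant (f : R -> R) c :
  vanishes_at_infinity f -> (forall y, f y = c) -> c = 0.
Proof.
  intros Hf Hc.
  destruct (Req_dec c 0) as [|Hne]; [assumption | exfalso].
  destruct (Hf (Rabs c) (Rabs_pos_lt c Hne)) as [M HM].
  assert (HM1 : M < Rabs (Rabs M + 1)).
  { rewrite Rabs_right by (pose proof (Rabs_pos M); lra). pose proof (Rle_abs M); lra. }
  specialize (HM _ HM1). rewrite Hc in HM. lra.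
Qed.

Lemma vanishing_square (f : R -> R) :
  vanishes_at_infinity f -> vanishes_at_infinity (fun y => f y ^ 2).
Proof.
  intros Hf eps Heps.
  destruct (Hf (Rmin eps 1) ltac:(apply Rmin_pos; lra)) as [M HM].
  exists M; intros y Hy. specialize (HM y Hy).
  pose proof (Rmin_l eps 1); pose proof (Rmin_r eps 1); pose proof (Rabs_pos (f y)).
  rewrite <- RPow_abs. simpl. nra.
Qed.

(* An affine function of a parameter k vanishing at two distinct values of k
   has vanishing coefficients: this separates the profile equations, whose
   coefficients depend on time only through k. *)
Lemma affine_vanishing_twice a b k1 k2 : k1 <> k2 ->
  a + k1 * b = 0 -> a + k2 * b = 0 -> a = 0 /\ b = 0.
Proof.
  intros Hk H1 H2.
  assert (Hb : (k1 - k2) * b = 0) by lra.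
  apply Rmult_integral in Hb; destruct Hb as [Hb | Hb]; [lra |].
  split; [rewrite Hb in H1; lra | exact Hb].
Qed.

(* If p q' = 0 with q = - p'' and q' continuous, then q' vanishes: near a
   point where q' <> 0 the function p vanishes, hence so do p'' and q. *)
Lemma product_vanishing_flat (p p1 p2 q q1 : R -> R) y0 :
  (forall y, derivable_pt_lim p y (p1 y)) ->
  (forall y, derivable_pt_lim p1 y (p2 y)) ->
  (forall y, q y = - p2 y) ->
  (forall y, derivable_pt_lim q y (q1 y)) -> continuity_pt q1 y0 ->
  (forall y, p y * q1 y = 0) -> q1 y0 = 0.
Proof.
  intros Hp Hp1 Hq Hq1 Hcont Hprod.
  destruct (Req_dec (q1 y0) 0) as [|Hne]; [assumption | exfalso].
  destruct (continuous_neq_0 q1 y0 Hcont Hne) as [del Hdel].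
  assert (Hball : forall y, Rabs (y - y0) < del -> q1 y <> 0).
  { intros y Hy. replace y with (y0 + (y - y0)) by ring. now apply Hdel. }
  assert (Hp0 : forall y, Rabs (y - y0) < del -> p y = 0).
  { intros y Hy. destruct (Rmult_integral _ _ (Hprod y)) as [|Hz]; [assumption |].
    now destruct (Hball y Hy). }
  assert (Hp10 : forall y, Rabs (y - y0) < del -> p1 y = 0)
    by (intros y Hy; exact (derive_locally_zero p y0 y del _ Hy Hp0 (Hp y))).
  assert (Hq0 : forall y, Rabs (y - y0) < del -> q y = 0).
  { intros y Hy. rewrite Hq, (derive_locally_zero p1 y0 y del _ Hy Hp10 (Hp1 y)). ring. }
  apply Hne, (derive_locally_zero q y0 y0 del); [| exact Hq0 | apply Hq1].
  rewrite Rminus_diag, Rabs_R0. apply cond_pos.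
Qed.

Lemma contD_boundary_value (F : R -> R -> R) Y c : contD F ->
  (forall X, X < 0 -> F X Y = c) -> F 0 Y = c.
Proof.
  intros HF Hc.
  destruct (Req_dec (F 0 Y) c) as [|Hne]; [assumption | exfalso].
  destruct (HF 0 Y (Rle_refl 0) _ (Rabs_pos_lt _ (Rminus_eq_contra _ _ Hne))) as [del [Hdel Hclose]].
  specialize (Hclose (- del / 2) Y ltac:(lra)).
  rewrite Rminus_0_r, Rminus_diag, Rabs_R0, Rabs_left, Hc in Hclose by lra.
  rewrite <- Rabs_Ropp, Ropp_minus_distr in Hclose. lra.
Qed.

Lemma Rpower_pos x y : 0 < Rpower x y.
Proof. apply exp_pos. Qed.

Lemma Rpower_minus_shift x e g F : Rpower x (e - g) * F = Rpower x e * (F * Rpower x (- g)).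
Proof. unfold Rminus. rewrite Rpower_plus. ring. Qed.

Definition visits (gamma T : R) (W : R -> R -> R -> Prop) (X Y t : R) : Prop :=
  0 < 1 + X * Rpower (T - t) gamma /\
  W (1 + X * Rpower (T - t) gamma) (Y * Rpower (T - t) gamma) t.

(* The three geometric properties of the regions (i) and (ii) that the proof
   uses: W lies in {r < 1, t < T}; W is open in r and z and towards the past
   in t; every point (X, Y) with X < 0 is reached by W at two distinct times. *)
Definition self_similar_region (gamma T : R) (W : R -> R -> R -> Prop) : Prop :=
  (forall r z t, W r z t -> r < 1 /\ t < T) /\
  (forall r z t, W r z t -> exists e, 0 < e /\
      (forall r', Rabs (r' - r) < e -> W r' z t) /\
      (forall z', Rabs (z' - z) < e -> W r z' t) /\
      (forall t', t - e < t' <= t -> W r z t')) /\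
  (forall X Y, X < 0 -> exists t1 t2,
      t1 < t2 /\ visits gamma T W X Y t1 /\ visits gamma T W X Y t2).

Lemma interval_margin a b x : a < x < b ->
  exists e, 0 < e /\ forall x', Rabs (x' - x) < e -> a < x' < b.
Proof.
  intros Hx. exists (Rmin (x - a) (b - x)).
  pose proof (Rmin_l (x - a) (b - x)); pose proof (Rmin_r (x - a) (b - x)).
  split; [apply Rmin_pos; lra |]. intros x' Hx'. apply Rabs_def2 in Hx'. lra.
Qed.

Lemma box_margin a1 b1 a2 b2 a3 b3 r z t :
  a1 < r < b1 -> a2 < z < b2 -> a3 < t < b3 -> exists e, 0 < e /\
  (forall r', Rabs (r' - r) < e -> a1 < r' < b1) /\
  (forall z', Rabs (z' - z) < e -> a2 < z' < b2) /\
  (forall t', t - e < t' <= t -> a3 < t' < b3).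
Proof.
  intros Hr Hz Ht.
  destruct (interval_margin _ _ _ Hr) as [e1 [He1 Hr']].
  destruct (interval_margin _ _ _ Hz) as [e2 [He2 Hz']].
  destruct (interval_margin _ _ _ Ht) as [e3 [He3 Ht']].
  exists (Rmin e1 (Rmin e2 e3)).
  pose proof (Rmin_l e1 (Rmin e2 e3)); pose proof (Rmin_r e1 (Rmin e2 e3)).
  pose proof (Rmin_l e2 e3); pose proof (Rmin_r e2 e3).
  split; [repeat apply Rmin_pos; assumption |].
  split; [| split]; intros x Hx; [apply Hr' | apply Hz' | apply Ht', Rabs_def1]; lra.
Qed.

Lemma small_power gamma e : 0 < gamma -> 0 < e ->
  exists tau0, 0 < tau0 /\ forall tau, 0 < tau <= tau0 -> Rpower tau gamma < e.
Proof.
  intros Hg He. exists (Rpower (e / 2) (1 / gamma)). split; [apply Rpower_pos |].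
  intros tau Htau.
  eapply Rle_lt_trans; [apply Rle_Rpower_l; [lra | exact Htau] |].
  rewrite Rpower_mult. replace (1 / gamma * gamma) with 1 by (field; lra).
  rewrite Rpower_1; lra.
Qed.

Lemma visits_of_box gamma T (W : R -> R -> R -> Prop) X Y t delta :
  X < 0 -> t < T -> delta <= 1 ->
  (forall r z, 1 - delta < r < 1 -> - delta < z < delta -> W r z t) ->
  (Rabs X + Rabs Y) * Rpower (T - t) gamma < delta ->
  visits gamma T W X Y t.
Proof.
  intros HX Ht Hd Hbox Hsize. unfold visits.
  pose proof (Rpower_pos (T - t) gamma) as Hs.
  set (s := Rpower (T - t) gamma) in *.
  rewrite Rabs_left in Hsize by lra.
  assert (HY : - Rabs Y <= Y <= Rabs Y) by (split; [pose proof (Rle_abs (- Y)); rewrite Rabs_Ropp in *; lra | apply Rle_abs]).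
  assert (HXs : - delta < X * s) by nra.
  assert (- delta < Y * s < delta) by (split; nra).
  split; [nra |]. apply Hbox; [split; nra | assumption].
Qed.

Lemma regionC_self_similar gamma T d (W : R -> R -> R -> Prop) :
  0 < gamma -> 0 < d < 1 -> (forall r z t, W r z t <-> regionC T d r z t) ->
  self_similar_region gamma T W.
Proof.
  intros Hg Hd HW. unfold regionC in HW. split; [| split].
  - intros r z t Hw. apply HW in Hw. lra.
  - intros r z t Hw. apply HW in Hw. destruct Hw as [Hr [Hz Ht]].
    destruct (box_margin _ _ _ _ _ _ _ _ _ Hr Hz Ht) as [e [He [Hr' [Hz' Ht']]]].
    exists e; repeat split; [exact He | ..]; intros x Hx; apply HW.
    + specialize (Hr' x Hx). lra.
    + specialize (Hz' x Hx). lra.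
    + specialize (Ht' x Hx). lra.
  - intros X Y HX.
    set (M := Rabs X + Rabs Y + 1).
    assert (HM : 0 < M) by (unfold M; pose proof (Rabs_pos X); pose proof (Rabs_pos Y); lra).
    destruct (small_power gamma (d / M) Hg ltac:(apply Rdiv_lt_0_compat; lra))
      as [tau0 [Htau0 Hsmall]].
    pose proof (Rmin_l tau0 (d / 2)); pose proof (Rmin_r tau0 (d / 2)).
    set (tau1 := Rmin tau0 (d / 2)) in *.
    assert (Htau1 : 0 < tau1) by (apply Rmin_pos; lra).
    assert (Hvis : forall tau, 0 < tau <= tau1 -> visits gamma T W X Y (T - tau)).
    { intros tau Htau. apply (visits_of_box _ _ _ _ _ _ d); [lra | lra | lra | |].
      - intros r z Hr Hz. apply HW. repeat split; lra.
      - replace (T - (T - tau)) with tau by ring.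
        specialize (Hsmall tau ltac:(lra)). pose proof (Rpower_pos tau gamma).
        apply (Rmult_lt_compat_l M) in Hsmall; [| lra].
        replace (M * (d / M)) with d in Hsmall by (field; lra).
        unfold M in Hsmall. lra. }
    exists (T - tau1), (T - tau1 / 2). split; [lra |].
    split; apply Hvis; lra.
Qed.

Lemma regionW_self_similar gamma T T0 (delta : R -> R) (W : R -> R -> R -> Prop) :
  T0 < T -> admissible_delta gamma T T0 delta ->
  (forall r z t, W r z t <-> regionW T T0 delta r z t) ->
  self_similar_region gamma T W.
Proof.
  intros HT0 [Hpos [Hdecr [Hlim Hsup]]] HW. unfold regionW in HW. split; [| split].
  - intros r z t Hw. apply HW in Hw. lra.
  - intros r z t Hw. apply HW in Hw. destruct Hw as [Ht [Hr Hz]].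
    destruct (box_margin _ _ _ _ _ _ _ _ _ Hr Hz Ht) as [e [He [Hr' [Hz' Ht']]]].
    exists e; repeat split; [exact He | ..]; intros x Hx; apply HW.
    + specialize (Hr' x Hx). lra.
    + specialize (Hz' x Hx). lra.
    + specialize (Ht' x Hx).
      assert (delta t <= delta x).
      { destruct (Req_dec x t) as [-> | Hne]; [lra | apply Hdecr; lra]. }
      lra.
  - intros X Y HX.
    destruct (Hlim 1 Rlt_0_1) as [eta [Heta Hsmall]].
    assert (Hvis : forall t, T0 < t < T -> T - eta < t ->
              Rpower (T - t) (- gamma) * delta t > Rabs X + Rabs Y ->
              visits gamma T W X Y t).
    { intros t Ht Hte Hwide.
      specialize (Hsmall t Ht Hte).
      apply (visits_of_box _ _ _ _ _ _ (delta t)); [lra | lra | lra | |].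
      - intros r z Hr Hz. apply HW. repeat split; lra.
      - rewrite Rpower_Ropp in Hwide. pose proof (Rpower_pos (T - t) gamma).
        apply (Rmult_lt_compat_l (Rpower (T - t) gamma)) in Hwide; [| assumption].
        rewrite <- Rmult_assoc, Rinv_r, Rmult_1_l in Hwide by lra. lra. }
    destruct (Hsup (Rabs X + Rabs Y) eta Heta) as [t1 [Ht1 [Ht1e Hw1]]].
    destruct (Hsup (Rabs X + Rabs Y) (T - t1) ltac:(lra)) as [t2 [Ht2 [Ht2e Hw2]]].
    exists t1, t2. split; [lra |]. split; apply Hvis; lra.
Qed.

Lemma scale_ratio_injective X s1 s2 : 0 < s2 < s1 ->
  0 < 1 + X * s1 -> 0 < 1 + X * s2 -> s1 / (1 + X * s1) <> s2 / (1 + X * s2).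
Proof.
  intros Hs H1 H2 Heq.
  assert (Hcross : s1 * (1 + X * s2) = s2 * (1 + X * s1)).
  { apply (Rmult_eq_compat_r ((1 + X * s1) * (1 + X * s2))) in Heq.
    field_simplify in Heq; lra. }
  lra.
Qed.

Definition simR (gamma T r t : R) : R := (r - 1) * Rpower (T - t) (- gamma).
Definition simZ (gamma T z t : R) : R := z * Rpower (T - t) (- gamma).

Definition self_similar (gamma T : R) (W : R -> R -> R -> Prop) (e : R)
  (f : R -> R -> R -> R) (F : R -> R -> R) : Prop :=
  forall r z t, W r z t -> f r z t = Rpower (T - t) e * F (simR gamma T r t) (simZ gamma T z t).

Lemma visit_coordinates gamma T X Y t : t < T ->
  simR gamma T (1 + X * Rpower (T - t) gamma) t = X /\
  simZ gamma T (Y * Rpower (T - t) gamma) t = Y.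
Proof.
  intros Ht. unfold simR, simZ. rewrite Rpower_Ropp.
  pose proof (Rpower_pos (T - t) gamma). split; field; lra.
Qed.

Lemma euler_solution_parts W (u1 w1 psi1 : R -> R -> R -> R) :
  euler_solution_on W u1 w1 psi1 -> exists psir psiz : R -> R -> R -> R,
  (forall r z t, W r z t -> derivable_pt_lim (fun x => psi1 x z t) r (psir r z t)) /\
  (forall r z t, W r z t -> derivable_pt_lim (fun y => psi1 r y t) z (psiz r z t)) /\
  (forall r z t, W r z t -> exists prr pzz,
     derivable_pt_lim (fun x => psir x z t) r prr /\
     derivable_pt_lim (fun y => psiz r y t) z pzz /\
     - (prr + 3 / r * psir r z t + pzz) = w1 r z t) /\
  (forall r z t, W r z t -> exists wt wr wz u2z,
     derivable_pt_lim (fun s => w1 r z s) t wt /\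
     derivable_pt_lim (fun x => w1 x z t) r wr /\
     derivable_pt_lim (fun y => w1 r y t) z wz /\
     derivable_pt_lim (fun y => u1 r y t ^ 2) z u2z /\
     wt + (- r * psiz r z t) * wr + (2 * psi1 r z t + r * psir r z t) * wz = u2z).
Proof.
  intros [psir [psiz Hsol]]. exists psir, psiz.
  repeat split; intros r z t Hw;
    destruct (Hsol r z t Hw) as (? & ? & ? & wt & wr & wz & u2z & prr & pzz &
      _ & _ & _ & Dwt & Dwr & Dwz & Du2z & Dpr & Dpz & Dprr & Dpzz & _ & Hvort & Hpois);
    eauto 10.
Qed.

Section SelfSimilarSolution.

Variables (gamma T : R) (W : R -> R -> R -> Prop).
Hypothesis gamma_pos : 0 < gamma.
Hypothesis W_below : forall r z t, W r z t -> r < 1 /\ t < T.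
Hypothesis W_open : forall r z t, W r z t -> exists e, 0 < e /\
  (forall r', Rabs (r' - r) < e -> W r' z t) /\
  (forall z', Rabs (z' - z) < e -> W r z' t) /\
  (forall t', t - e < t' <= t -> W r z t').
Hypothesis W_visited : forall X Y, X < 0 -> exists t1 t2,
  t1 < t2 /\ visits gamma T W X Y t1 /\ visits gamma T W X Y t2.

Local Notation Rs := (simR gamma T).

Local Notation Zs := (simZ gamma T).
Local Notation ss := (self_similar gamma T W).

Lemma simR_neg r z t : W r z t -> Rs r t < 0.
Proof.
  intros Hw. destruct (W_below r z t Hw).
  pose proof (Rpower_pos (T - t) (- gamma)). unfold simR. nra.
Qed.

Lemma ss_derivable_r e f F FR r z t : ss e f F ->
  (forall X Y, X < 0 -> derivable_pt_lim (fun x => F x Y) X (FR X Y)) ->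
  W r z t ->
  derivable_pt_lim (fun x => f x z t) r (Rpower (T - t) (e - gamma) * FR (Rs r t) (Zs z t)).
Proof.
  intros Hf HFR Hw. destruct (W_open r z t Hw) as [e0 [He0 [Hr _]]].
  rewrite Rpower_minus_shift.
  apply (derivable_pt_lim_locally_ext
           (fun x => Rpower (T - t) e * F ((x - 1) * Rpower (T - t) (- gamma)) (Zs z t)) _ r (r - e0) (r + e0)).
  - lra.
  - intros x Hx. symmetry. apply Hf, Hr, Rabs_def1; lra.
  - apply (derive_rescaled (fun x => F x (Zs z t))), HFR, (simR_neg r z t Hw).
Qed.

Lemma ss_derivable_z e f F FZ r z t : ss e f F ->
  (forall X Y, X < 0 -> derivable_pt_lim (fun y => F X y) Y (FZ X Y)) ->
  W r z t ->
  derivable_pt_lim (fun y => f r y t) z (Rpower (T - t) (e - gamma) * FZ (Rs r t) (Zs z t)).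
Proof.
  intros Hf HFZ Hw. destruct (W_open r z t Hw) as [e0 [He0 [_ [Hz _]]]].
  rewrite Rpower_minus_shift.
  apply (derivable_pt_lim_locally_ext
           (fun y => Rpower (T - t) e * F (Rs r t) ((y - 0) * Rpower (T - t) (- gamma))) _ z (z - e0) (z + e0)).
  - lra.
  - intros y Hy. rewrite Rminus_0_r. symmetry. apply Hf, Hz, Rabs_def1; lra.
  - unfold simZ. rewrite <- (Rminus_0_r z) at 2.
    apply (derive_rescaled (fun y => F (Rs r t) y)), HFZ, (simR_neg r z t Hw).
Qed.

Lemma ss_partial_r e f F FR fr : ss e f F ->
  (forall X Y, X < 0 -> derivable_pt_lim (fun x => F x Y) X (FR X Y)) ->
  (forall r z t, W r z t -> derivable_pt_lim (fun x => f x z t) r (fr r z t)) ->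
  ss (e - gamma) fr FR.
Proof.
  intros Hf HFR Hfr r z t Hw.
  exact (uniqueness_limite _ _ _ _ (Hfr r z t Hw) (ss_derivable_r e f F FR r z t Hf HFR Hw)).
Qed.

Lemma ss_partial_z e f F FZ fz : ss e f F ->
  (forall X Y, X < 0 -> derivable_pt_lim (fun y => F X y) Y (FZ X Y)) ->
  (forall r z t, W r z t -> derivable_pt_lim (fun y => f r y t) z (fz r z t)) ->
  ss (e - gamma) fz FZ.
Proof.
  intros Hf HFZ Hfz r z t Hw.
  exact (uniqueness_limite _ _ _ _ (Hfz r z t Hw) (ss_derivable_z e f F FZ r z t Hf HFZ Hw)).
Qed.

Lemma ss_deriv_t e f F G G1 r z t l : ss e f F ->
  (forall X Y, X < 0 -> F X Y = G Y) -> (forall Y, derivable_pt_lim G Y (G1 Y)) ->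
  W r z t -> derivable_pt_lim (fun s => f r z s) t l ->
  l = Rpower (T - t) (e - 1) * (- e * G (Zs z t) + gamma * Zs z t * G1 (Zs z t)).
Proof.
  intros Hf HFG HG Hw Hl.
  destruct (W_open r z t Hw) as [e0 [He0 [_ [_ Ht]]]]. destruct (W_below r z t Hw) as [_ HtT].
  set (A := fun s => Rpower (T - s) (- gamma)).
  assert (DZ : derivable_pt_lim (fun s => z * A s) t (z * (- - gamma * Rpower (T - t) (- gamma - 1))))
    by exact (derivable_pt_lim_scal _ z t _ (derive_time_power T (- gamma) t HtT)).
  pose proof (derivable_pt_lim_mult _ _ t _ _ (derive_time_power T e t HtT)
                (derivable_pt_lim_comp _ G t _ _ DZ (HG (z * A t)))) as D.
  rewrite (derive_unique_left _ _ t l _ e0 He0 ltac:(intros s Hs; rewrite (Hf r z s (Ht s Hs)), HFG by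
           (apply (simR_neg r z s), Ht, Hs); reflexivity) Hl D).
  unfold comp, mult_fct, simZ, A. cbv beta.
  assert (Htau : 0 < T - t) by lra.
  assert (E1 : Rpower (T - t) e = Rpower (T - t) (e - 1) * (T - t)).
  { replace e with (e - 1 + 1) at 1 by ring. rewrite (Rpower_plus (e - 1) 1), Rpower_1 by exact Htau. reflexivity. }
  assert (E2 : Rpower (T - t) (- gamma - 1) = Rpower (T - t) (- gamma) * / (T - t)).
  { replace (- gamma - 1) with (- gamma + - (1)) by ring.
    rewrite (Rpower_plus (- gamma)), (Rpower_Ropp _ 1), Rpower_1 by exact Htau. reflexivity. }
  rewrite E1, E2. field. lra.
Qed.

Variables (u1 w1 psi1 psir psiz : R -> R -> R -> R).
Hypothesis psir_spec : forall r z t, W r z t -> derivable_pt_lim (fun x => psi1 x z t) r (psir r z t).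
Hypothesis psiz_spec : forall r z t, W r z t -> derivable_pt_lim (fun y => psi1 r y t) z (psiz r z t).
Hypothesis poisson_eq : forall r z t, W r z t -> exists prr pzz,
  derivable_pt_lim (fun x => psir x z t) r prr /\
  derivable_pt_lim (fun y => psiz r y t) z pzz /\
  - (prr + 3 / r * psir r z t + pzz) = w1 r z t.
Hypothesis vorticity_eq : forall r z t, W r z t -> exists wt wr wz u2z,
  derivable_pt_lim (fun s => w1 r z s) t wt /\
  derivable_pt_lim (fun x => w1 x z t) r wr /\
  derivable_pt_lim (fun y => w1 r y t) z wz /\
  derivable_pt_lim (fun y => u1 r y t ^ 2) z u2z /\
  wt + (- r * psiz r z t) * wr + (2 * psi1 r z t + r * psir r z t) * wz = u2z.

Variables (U UZ Om OR OZ Psi PR PZ PRR PZZ : R -> R -> R).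
Hypothesis u1_ss : ss (-1 + gamma / 2) u1 U.
Hypothesis w1_ss : ss (-1) w1 Om.
Hypothesis psi1_ss : ss (-1 + 2 * gamma) psi1 Psi.
Hypothesis U_Z : forall X Y, X < 0 -> derivable_pt_lim (fun y => U X y) Y (UZ X Y).
Hypothesis Om_R : forall X Y, X < 0 -> derivable_pt_lim (fun x => Om x Y) X (OR X Y).
Hypothesis Om_Z : forall X Y, X < 0 -> derivable_pt_lim (fun y => Om X y) Y (OZ X Y).
Hypothesis Psi_R : forall X Y, X < 0 -> derivable_pt_lim (fun x => Psi x Y) X (PR X Y).
Hypothesis Psi_Z : forall X Y, X < 0 -> derivable_pt_lim (fun y => Psi X y) Y (PZ X Y).
Hypothesis PR_R : forall X Y, X < 0 -> derivable_pt_lim (fun x => PR x Y) X (PRR X Y).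
Hypothesis PZ_Z : forall X Y, X < 0 -> derivable_pt_lim (fun y => PZ X y) Y (PZZ X Y).
Hypothesis OZ_cont : contD OZ.
Hypothesis Psi_cont : contD Psi.
Hypothesis profiles_decay : forall X, X <= 0 -> forall eps, eps > 0 -> exists M,
  forall Y, M < Rabs Y -> Rabs (U X Y) + Rabs (Om X Y) < eps.

Lemma psir_ss : ss (-1 + 2 * gamma - gamma) psir PR.
Proof. exact (ss_partial_r _ _ _ _ _ psi1_ss Psi_R psir_spec). Qed.

Lemma psiz_ss : ss (-1 + 2 * gamma - gamma) psiz PZ.
Proof. exact (ss_partial_z _ _ _ _ _ psi1_ss Psi_Z psiz_spec). Qed.

Lemma poisson_profile_at r z t : W r z t ->
  (PRR (Rs r t) (Zs z t) + PZZ (Rs r t) (Zs z t) + Om (Rs r t) (Zs z t))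
  + Rpower (T - t) gamma / r * (3 * PR (Rs r t) (Zs z t)) = 0.
Proof.
  intros Hw. destruct (poisson_eq r z t Hw) as (prr & pzz & Dprr & Dpzz & Heq).
  rewrite (uniqueness_limite _ _ _ _ Dprr (ss_derivable_r _ _ _ _ r z t psir_ss PR_R Hw)),
          (uniqueness_limite _ _ _ _ Dpzz (ss_derivable_z _ _ _ _ r z t psiz_ss PZ_Z Hw)),
          psir_ss, w1_ss in Heq by exact Hw.
  replace (-1 + 2 * gamma - gamma - gamma) with (-1) in Heq by ring.
  replace (-1 + 2 * gamma - gamma) with (gamma + -1) in Heq by ring.
  rewrite Rpower_plus in Heq.
  pose proof (Rpower_pos (T - t) (-1)).
  apply (Rmult_eq_reg_l (Rpower (T - t) (-1))); [unfold Rdiv in *; lra | lra].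
Qed.

Lemma visited_at_two_scales X Y : X < 0 -> exists t1 t2,
  visits gamma T W X Y t1 /\ visits gamma T W X Y t2 /\ t1 < T /\ t2 < T /\
  Rpower (T - t2) gamma < Rpower (T - t1) gamma.
Proof.
  intros HX. destruct (W_visited X Y HX) as [t1 [t2 [H12 [V1 V2]]]].
  pose proof (W_below _ _ _ (proj2 V1)); pose proof (W_below _ _ _ (proj2 V2)).
  exists t1, t2. do 4 (split; [assumption || lra |]).
  apply Rlt_Rpower_l; lra.
Qed.

(* Comparing the Poisson profile equation at two scales separates it. *)
Lemma poisson_profile X Y : X < 0 ->
  PR X Y = 0 /\ PRR X Y + PZZ X Y + Om X Y = 0.
Proof.
  intros HX. destruct (visited_at_two_scales X Y HX) as [t1 [t2 [[P1 V1] [[P2 V2] [T1 [T2 Hs]]]]]].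
  pose proof (poisson_profile_at _ _ _ V1) as E1. pose proof (poisson_profile_at _ _ _ V2) as E2.
  destruct (visit_coordinates gamma T X Y t1 T1) as [-> ->] in E1.
  destruct (visit_coordinates gamma T X Y t2 T2) as [-> ->] in E2.
  pose proof (Rpower_pos (T - t2) gamma).
  destruct (affine_vanishing_twice _ _ _ _ (scale_ratio_injective X (Rpower (T - t1) gamma) (Rpower (T - t2) gamma) ltac:(lra) P1 P2) E1 E2).
  split; lra.
Qed.

Lemma PRR_zero X Y : X < 0 -> PRR X Y = 0.
Proof.
  intros HX.
  apply (derive_locally_zero (fun x => PR x Y) X X (- X)); [| | exact (PR_R X Y HX)].
  - rewrite Rminus_diag, Rabs_R0. lra.
  - intros x Hx. apply Rabs_def2 in Hx. apply poisson_profile. lra.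
Qed.

Lemma Om_is_PZZ X Y : X < 0 -> Om X Y = - PZZ X Y.
Proof.
  intros HX. pose proof (proj2 (poisson_profile X Y HX)). rewrite PRR_zero in * by exact HX. lra.
Qed.

Lemma Psi_radial X Y : X < 0 -> Psi X Y = Psi (-1) Y.
Proof.
  intros HX. apply (zero_derive_const (fun x => Psi x Y)). intros x Hx.
  assert (Hx0 : x < 0) by (pose proof (Rmax_lub_lt X (-1) 0 HX ltac:(lra)); lra).
  rewrite <- (proj1 (poisson_profile x Y Hx0)). exact (Psi_R x Y Hx0).
Qed.

Lemma PZ_radial X Y : X < 0 -> PZ X Y = PZ (-1) Y.
Proof.
  intros HX. apply (derive_ext_unique (fun y => Psi X y) (fun y => Psi (-1) y) Y);
    [intro y; exact (Psi_radial X y HX) | exact (Psi_Z X Y HX) | apply Psi_Z; lra].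
Qed.

Lemma PZZ_radial X Y : X < 0 -> PZZ X Y = PZZ (-1) Y.
Proof.
  intros HX. apply (derive_ext_unique (fun y => PZ X y) (fun y => PZ (-1) y) Y);
    [intro y; exact (PZ_radial X y HX) | exact (PZ_Z X Y HX) | apply PZ_Z; lra].
Qed.

Lemma Om_radial X Y : X < 0 -> Om X Y = Om (-1) Y.
Proof. intros HX. rewrite !Om_is_PZZ, PZZ_radial by lra. reflexivity. Qed.

Lemma OZ_radial X Y : X < 0 -> OZ X Y = OZ (-1) Y.
Proof.
  intros HX. apply (derive_ext_unique (fun y => Om X y) (fun y => Om (-1) y) Y);
    [intro y; exact (Om_radial X y HX) | exact (Om_Z X Y HX) | apply Om_Z; lra].
Qed.

Lemma OR_zero X Y : X < 0 -> OR X Y = 0.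
Proof.
  intros HX.
  apply (derive_unique_left (fun x => Om x Y) (fct_cte (Om (-1) Y)) X _ _ (- X));
    [lra | | exact (Om_R X Y HX) | apply derivable_pt_lim_const].
  intros x Hx. apply Om_radial. lra.
Qed.

Lemma vorticity_profile_at r z t : W r z t ->
  let X := Rs r t in let Y := Zs z t in
  (Om X Y + gamma * Y * OZ X Y - 2 * U X Y * UZ X Y)
  + Rpower (T - t) gamma * (2 * Psi X Y * OZ X Y) = 0.
Proof.
  intros Hw X Y. pose proof (simR_neg r z t Hw) as HX. fold X in HX.
  destruct (W_below r z t Hw) as [_ HtT].
  destruct (vorticity_eq r z t Hw) as (wt & wr & wz & u2z & Dwt & Dwr & Dwz & Du2z & Heq).
  rewrite (ss_deriv_t _ _ _ _ (OZ (-1)) r z t wt w1_ss Om_radial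
             (fun y => Om_Z (-1) y ltac:(lra)) Hw Dwt) in Heq.
  rewrite (uniqueness_limite _ _ _ _ Dwr (ss_derivable_r _ _ _ _ r z t w1_ss Om_R Hw)) in Heq.
  rewrite (uniqueness_limite _ _ _ _ Dwz (ss_derivable_z _ _ _ _ r z t w1_ss Om_Z Hw)) in Heq.
  rewrite (uniqueness_limite _ _ _ _ Du2z
             (derive_square _ _ _ (ss_derivable_z _ _ _ _ r z t u1_ss U_Z Hw))) in Heq.
  rewrite psir_ss, psi1_ss, u1_ss in Heq by exact Hw. fold X Y in Heq.
  rewrite <- (Om_radial X Y HX), <- (OZ_radial X Y HX), (OR_zero X Y HX),
          (proj1 (poisson_profile X Y HX)) in Heq.
  set (E := Rpower (T - t) (-1 - 1)) in *.
  assert (Hpsi : Rpower (T - t) (-1 + 2 * gamma) * Rpower (T - t) (-1 - gamma) = Rpower (T - t) gamma * E)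
    by (unfold E; rewrite <- !Rpower_plus; f_equal; ring).
  assert (Hu : Rpower (T - t) (-1 + gamma / 2) * Rpower (T - t) (-1 + gamma / 2 - gamma) = E)
    by (unfold E; rewrite <- !Rpower_plus; f_equal; field).
  assert (Hpsi' : Rpower (T - t) (-1 + 2 * gamma) * Psi X Y * (Rpower (T - t) (-1 - gamma) * OZ X Y)
                  = Rpower (T - t) gamma * E * Psi X Y * OZ X Y) by (rewrite <- Hpsi; ring).
  assert (Hu' : Rpower (T - t) (-1 + gamma / 2) * U X Y * (Rpower (T - t) (-1 + gamma / 2 - gamma) * UZ X Y)
                = E * U X Y * UZ X Y) by (rewrite <- Hu; ring).
  assert (HE : 0 < E) by apply Rpower_pos.
  apply (Rmult_eq_reg_l E); [lra | lra].
Qed.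

(* Comparing the vorticity profile equation at two scales separates it. *)
Lemma vorticity_profile X Y : X < 0 ->
  Psi X Y * OZ X Y = 0 /\ Om X Y + gamma * Y * OZ X Y = 2 * U X Y * UZ X Y.
Proof.
  intros HX. destruct (visited_at_two_scales X Y HX) as [t1 [t2 [[_ V1] [[_ V2] [T1 [T2 Hs]]]]]].
  pose proof (vorticity_profile_at _ _ _ V1) as E1. pose proof (vorticity_profile_at _ _ _ V2) as E2.
  cbv zeta in E1, E2.
  destruct (visit_coordinates gamma T X Y t1 T1) as [-> ->] in E1.
  destruct (visit_coordinates gamma T X Y t2 T2) as [-> ->] in E2.
  destruct (affine_vanishing_twice _ _ (Rpower (T - t1) gamma) (Rpower (T - t2) gamma) ltac:(lra) E1 E2). split; lra.
Qed.

(* The vorticity profile has no Z-dependence: where OZ <> 0 the relation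
   Psi OZ = 0 forces Psi, hence PZZ = - Om, to vanish, and then OZ = 0. *)
Lemma OZ_zero X Y : X < 0 -> OZ X Y = 0.
Proof.
  intros HX. rewrite OZ_radial by exact HX.
  apply (product_vanishing_flat (Psi (-1)) (PZ (-1)) (PZZ (-1)) (Om (-1)) (OZ (-1)) Y);
    intro y || idtac.
  - apply Psi_Z; lra.
  - apply PZ_Z; lra.
  - apply Om_is_PZZ; lra.
  - apply Om_Z; lra.
  - apply contD_slice; [exact OZ_cont | lra].
  - apply vorticity_profile; lra.
Qed.

Lemma U_vanishes X : X <= 0 -> vanishes_at_infinity (fun y => U X y).
Proof.
  intros HX eps Heps. destruct (profiles_decay X HX eps Heps) as [M HM].
  exists M. intros y Hy. specialize (HM y Hy). pose proof (Rabs_pos (Om X y)). lra.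
Qed.

Lemma Om_vanishes X : X <= 0 -> vanishes_at_infinity (fun y => Om X y).
Proof.
  intros HX eps Heps. destruct (profiles_decay X HX eps Heps) as [M HM].
  exists M. intros y Hy. specialize (HM y Hy). pose proof (Rabs_pos (U X y)). lra.
Qed.

Lemma Om_zero X Y : X < 0 -> Om X Y = 0.
Proof.
  intros HX. apply (vanishing_constant (fun y => Om X y)); [apply Om_vanishes; lra |].
  intro y. apply (zero_derive_const (fun y => Om X y)). intros x _.
  rewrite <- (OZ_zero X x HX). exact (Om_Z X x HX).
Qed.

(* U U_Z = 0, so U^2 is constant in Z and vanishes at infinity. *)
Lemma U_zero X Y : X < 0 -> U X Y = 0.
Proof.
  intros HX.
  assert (Hsq : U X Y ^ 2 = 0).
  { apply (vanishing_constant (fun y => U X y ^ 2)); [apply vanishing_square, U_vanishes; lra |].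
    intro y. apply (zero_derive_const (fun y => U X y ^ 2)). intros x _.
    assert (Hflat : 2 * U X x * UZ X x = 0).
    { rewrite <- (proj2 (vorticity_profile X x HX)), Om_zero, OZ_zero by exact HX. ring. }
    rewrite <- Hflat. exact (derive_square _ _ _ (U_Z X x HX)). }
  simpl in Hsq. nra.
Qed.

(* The stream profile is affine in Z: PZZ = - Om = 0. *)
Lemma Psi_affine : exists a b, forall X Y, X <= 0 -> Psi X Y = a * Y + b.
Proof.
  assert (HPZ : forall y, PZ (-1) y = PZ (-1) 0).
  { intro y. apply (zero_derive_const (PZ (-1))). intros x _.
    replace 0 with (PZZ (-1) x) by (pose proof (Om_is_PZZ (-1) x ltac:(lra)); rewrite Om_zero in * by lra; lra).
    apply PZ_Z; lra. }
  exists (PZ (-1) 0), (Psi (-1) 0).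
  assert (Hneg : forall X Y, X < 0 -> Psi X Y = PZ (-1) 0 * Y + Psi (-1) 0).
  { intros X Y HX. rewrite Psi_radial by exact HX.
    apply (affine_of_constant_derivative (Psi (-1))). intro y. rewrite <- (HPZ y). apply Psi_Z; lra. }
  intros X Y HX. destruct (Rle_lt_or_eq_dec X 0 HX) as [HX' | ->]; [now apply Hneg |].
  apply contD_boundary_value; [exact Psi_cont |]. intros X' HX'. now apply Hneg.
Qed.

Lemma self_similar_solution_trivial :
  (forall r z t, W r z t -> u1 r z t = 0 /\ w1 r z t = 0) /\
  exists a b : R,
    (forall r z t, W r z t ->
       psi1 r z t = a * Rpower (T - t) (-1 + gamma) * z + b * Rpower (T - t) (-1 + 2 * gamma)) /\
    (forall X Y, X <= 0 -> Psi X Y = a * Y + b).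
Proof.
  split.
  - intros r z t Hw. pose proof (simR_neg r z t Hw).
    rewrite u1_ss, w1_ss, U_zero, Om_zero by assumption. split; ring.
  - destruct Psi_affine as [a [b HPsi]]. exists a, b. split; [| exact HPsi].
    intros r z t Hw. pose proof (simR_neg r z t Hw).
    rewrite psi1_ss, HPsi by (assumption || lra). unfold simZ.
    replace (-1 + 2 * gamma) with (-1 + gamma + gamma) by ring.
    rewrite Rpower_plus, Rpower_Ropp.
    assert (0 < Rpower (T - t) gamma) by apply Rpower_pos. field. lra.
Qed.
End SelfSimilarSolution.

Theorem theorem1 :
  forall (gamma T : R) (W : R -> R -> R -> Prop)
         (u1 w1 psi1 : R -> R -> R -> R) (U Om Psi : R -> R -> R),
  0 < gamma -> 0 < T ->
  (* W is a region of type (i) or (ii) *)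
  ((exists d, 0 < d < 1 /\ forall r z t, W r z t <-> regionC T d r z t) \/
   (exists T0 (delta : R -> R), T0 < T /\ admissible_delta gamma T T0 delta /\
      forall r z t, W r z t <-> regionW T T0 delta r z t)) ->
  (* classical solution of the system on W *)
  euler_solution_on W u1 w1 psi1 ->
  (* self-similar form on W *)
  (forall r z t, W r z t ->
     u1 r z t = Rpower (T - t) (-1 + gamma / 2)
                  * U ((r - 1) * Rpower (T - t) (- gamma)) (z * Rpower (T - t) (- gamma)) /\
     w1 r z t = Rpower (T - t) (-1)
                  * Om ((r - 1) * Rpower (T - t) (- gamma)) (z * Rpower (T - t) (- gamma)) /\
     psi1 r z t = Rpower (T - t) (-1 + 2 * gamma)
                  * Psi ((r - 1) * Rpower (T - t) (- gamma)) (z * Rpower (T - t) (- gamma))) ->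
  (* smooth profiles on the closed half-plane D = {R <= 0} *)
  C2D U -> C2D Om -> C2D Psi ->
  (* decay: for each fixed R <= 0, |U| + |Om| -> 0 as |Z| -> oo *)
  (forall X, X <= 0 -> forall eps, eps > 0 -> exists M,
     forall Y, M < Rabs Y -> Rabs (U X Y) + Rabs (Om X Y) < eps) ->
  (forall r z t, W r z t -> u1 r z t = 0 /\ w1 r z t = 0) /\
  exists a b : R,
    (forall r z t, W r z t ->
       psi1 r z t = a * Rpower (T - t) (-1 + gamma) * z + b * Rpower (T - t) (-1 + 2 * gamma)) /\
    (forall X Y, X <= 0 -> Psi X Y = a * Y + b).
Proof.
  intros gamma T W u1 w1 psi1 U Om Psi Hg _ Hreg Hsol Hss HU HOm HPsi Hdecay.
  assert (HW : self_similar_region gamma T W).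
  { destruct Hreg as [[d [Hd HW]] | [T0 [delta [HT0 [Hdelta HW]]]]].
    - exact (regionC_self_similar gamma T d W Hg Hd HW).
    - exact (regionW_self_similar gamma T T0 delta W HT0 Hdelta HW). }
  destruct HW as [Hbelow [Hopen Hvisit]].
  destruct (euler_solution_parts W u1 w1 psi1 Hsol) as [psir [psiz [Hpr [Hpz [Hpois Hvort]]]]].
  destruct HU as [UR [UZ [[HUd _] _]]].
  destruct HOm as [OR [OZ [[HOd [_ [_ HOZc]]] _]]].
  destruct HPsi as [PR [PZ [[HPd [HPc _]] [[PRR [PRZ [HPRd _]]] [PZR [PZZ [HPZd _]]]]]]].
  exact (self_similar_solution_trivial gamma T W Hg Hbelow Hopen Hvisit
           u1 w1 psi1 psir psiz Hpr Hpz Hpois Hvort U UZ Om OR OZ Psi PR PZ PRR PZZ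
           (fun r z t Hw => proj1 (Hss r z t Hw))
           (fun r z t Hw => proj1 (proj2 (Hss r z t Hw)))
           (fun r z t Hw => proj2 (proj2 (Hss r z t Hw)))
           (fun X Y HX => proj2 (HUd X Y HX))
           (fun X Y HX => proj1 (HOd X Y HX)) (fun X Y HX => proj2 (HOd X Y HX))
           (fun X Y HX => proj1 (HPd X Y HX)) (fun X Y HX => proj2 (HPd X Y HX))
           (fun X Y HX => proj1 (HPRd X Y HX)) (fun X Y HX => proj2 (HPZd X Y HX))
           HOZc HPc Hdecay).
Qed.
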